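(* Let $(X,d,f)$ be a dynamical system and $\mathcal{A}=\{\mathcal{U}_n\}_{n\in\mathbb{N}}$ a complete defining sequence of $(X,d)$. (i) $(X,d,f)$ is topologically conjugate to the inverse limit of $(\hookrightarrow,(\mathcal{O}(\mathcal{U}_n),\sigma_n))$ equipped with the map $\sigma^*=(\sigma_n)^*$. (ii) If in addition $\mathcal{A}$ is tame and $f$ is uniformly continuous, then the conjugacy can be made uniform (the conjugating homeomorphism and its inverse are uniformly continuous).
   Context: Spaces are nonempty separable metrizable; a dynamical system $(X,d,f)$ has admissible metric $d$ and continuous $f$. A partition is a cover by pairwise disjoint nonempty clopen sets. A defining sequence is a sequence $\{\mathcal{U}_n\}$ of partitions, each refining the previous, whose union is a basis; complete if nested sequences $U_n\in\mathcal{U}_n$ have nonempty intersection; tame if $\sup\{\operatorname{diam}O:O\in\mathcal{U}_n\}\to0$ and each $\mathcal{U}_n$ is $\rho_n$-separated for some $\rho_n>0$. For a partition $\mathcal{U}$ (discrete metric), $\mathcal{O}(\mathcal{U})=\{(O_i)_{i\in\mathbb{N}}\in\mathcal{U}^{\mathbb{N}}: \forall k\ \exists x\in X \text{ with } f^i(x)\in O_i \text{ for } 0\le i\le k\}$, a shift space over the alphabet $\mathcal{U}$ with shift map $\sigma_n$ and metric $1/(i+1)$ ($i$ least index of disagreement). The bonding map $\hookrightarrow:\mathcal{O}(\mathcal{U}_{n+1})\to\mathcal{O}(\mathcal{U}_n)$ sends $(O_i)$ to the unique $(V_i)\in\mathcal{U}_n^{\mathbb{N}}$ with $O_i\subseteq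 V_i$. The inverse limit is $\{(y_n)\in\prod_n\mathcal{O}(\mathcal{U}_n): y_n=\hookrightarrow(y_{n+1})\}$ with metric $d_\Pi((y_n),(z_n))=\max_n d(y_n,z_n)/(n+1)$, and $\sigma^*$ is the restriction of $\prod_n\sigma_n$. *)

From HB Require Import structures.
From mathcomp Require Import all_boot all_order all_algebra.
From mathcomp Require Import boolp classical_sets reals.
Set Implicit Arguments. Unset Strict Implicit. Unset Printing Implicit Defensive.
Import Order.TTheory GRing.Theory Num.Theory.
Local Open Scope classical_set_scope.
Local Open Scope ring_scope.

Section Defs.
Variable R : realType.

Definition is_metric (X : Type) (d : X -> X -> R) : Prop :=
  [/\ forall x y, 0 <= d x y,
      forall x y, d x y = 0 <-> x = y,
      forall x y, d x y = d y x &
      forall x y z, d x z <= d x y + d y z].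

Definition separable (X : Type) (d : X -> X -> R) : Prop :=
  exists s : nat -> X, forall x (e : R), 0 < e -> exists n, d x (s n) < e.

Definition mopen (X : Type) (d : X -> X -> R) (A : set X) : Prop :=
  forall x, A x -> exists2 e : R, 0 < e & forall y, d x y < e -> A y.
Definition mclosed (X : Type) (d : X -> X -> R) (A : set X) : Prop :=
  mopen d (~` A).
Definition mclopen (X : Type) (d : X -> X -> R) (A : set X) : Prop :=
  mopen d A /\ mclosed d A.

Definition cont_on (T S : Type) (dT : T -> T -> R) (dS : S -> S -> R)
  (A : set T) (g : T -> S) : Prop :=
  forall a, A a -> forall e : R, 0 < e -> exists2 del : R, 0 < del &
    forall b, A b -> dT a b < del -> dS (g a) (g b) < e.
Definition unif_cont_on (T S : Type) (dT : T -> T -> R) (dS : S -> S -> R)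
  (A : set T) (g : T -> S) : Prop :=
  forall e : R, 0 < e -> exists2 del : R, 0 < del &
    forall a b, A a -> A b -> dT a b < del -> dS (g a) (g b) < e.

Definition is_partition (X : Type) (d : X -> X -> R) (P : set (set X)) : Prop :=
  [/\ forall A, P A -> A !=set0,
      forall A, P A -> mclopen d A,
      forall A B, P A -> P B -> A <> B -> A `&` B = set0 &
      forall x, exists2 A, P A & A x].

Definition refines (X : Type) (P Q : set (set X)) : Prop :=
  forall A, P A -> exists2 B, Q B & A `<=` B.

Definition defining_sequence (X : Type) (d : X -> X -> R)
  (U : nat -> set (set X)) : Prop :=
  [/\ forall n, is_partition d (U n),
      forall n, refines (U n.+1) (U n) &
      forall O x, mopen d O -> O x ->
        exists n, exists2 B, U n B & B x /\ B `<=` O].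

Definition complete_defseq (X : Type) (d : X -> X -> R)
  (U : nat -> set (set X)) : Prop :=
  defining_sequence d U /\
  forall V : nat -> set X, (forall n, U n (V n)) ->
    (forall n, V n.+1 `<=` V n) -> exists x, forall n, V n x.

Definition tame_defseq (X : Type) (d : X -> X -> R)
  (U : nat -> set (set X)) : Prop :=
  (forall e : R, 0 < e -> exists N, forall n, (N <= n)%N ->
     forall O, U n O -> forall x y, O x -> O y -> d x y <= e) /\
  (forall n, exists2 rho : R, 0 < rho &
     forall A B, U n A -> U n B -> A <> B ->
       forall a b, A a -> B b -> rho <= d a b).

Definition orbit_space (X : Type) (f : X -> X) (P : set (set X))
  : set (nat -> set X) :=
  [set s | (forall i, P (s i)) /\
           forall k, exists x, forall i, (i <= k)%N -> s i (iter i f x)].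

Definition shift (X : Type) (s : nat -> set X) : nat -> set X :=
  fun i => s i.+1.

Definition first_diff (X : Type) (s t : nat -> set X) : nat :=
  xget 0%N [set i | s i <> t i /\ forall j, (j < i)%N -> s j = t j].

Definition shift_dist (X : Type) (s t : nat -> set X) : R :=
  if `[< s = t >] then 0 else 1 / ((first_diff s t)%:R + 1).

(* the bonding map: t is the image of s under P-bonding, i.e. t is the unique
   element of P^N with s i included in t i for all i *)
Definition bond_of (X : Type) (P : set (set X)) (s t : nat -> set X) : Prop :=
  forall i, P (t i) /\ s i `<=` t i.

Definition inv_limit (X : Type) (f : X -> X) (U : nat -> set (set X))
  : set (nat -> nat -> set X) :=
  [set y | (forall n, orbit_space f (U n) (y n)) /\
           forall n, bond_of (U n) (y n.+1) (y n)].

(* d_Pi(y,z) = max_n d(y_n,z_n)/(n+1) (the max is the sup, which is attained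
   whenever it is positive) *)
Definition dPi (X : Type) (y z : nat -> nat -> set X) : R :=
  sup [set shift_dist (y n) (z n) / (n%:R + 1) | n in [set: nat]].

Definition sigma_star (X : Type) (y : nat -> nat -> set X) : nat -> nat -> set X :=
  fun n => shift (y n).

Definition conjugacy (X : Type) (d : X -> X -> R) (f : X -> X)
  (U : nat -> set (set X)) (h : X -> nat -> nat -> set X)
  (g : (nat -> nat -> set X) -> X) : Prop :=
  [/\ forall x, inv_limit f U (h x),
      forall x, g (h x) = x,
      forall y, inv_limit f U y -> h (g y) = y,
      cont_on d (@dPi X) setT h /\ cont_on (@dPi X) d (inv_limit f U) g &
      forall x, h (f x) = sigma_star (h x)].

Definition topologically_conjugate_to_invlim (X : Type) (d : X -> X -> R)
  (f : X -> X) (U : nat -> set (set X)) : Prop :=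
  exists h g, conjugacy d f U h g.

Definition uniformly_conjugate_to_invlim (X : Type) (d : X -> X -> R)
  (f : X -> X) (U : nat -> set (set X)) : Prop :=
  exists h g, [/\ conjugacy d f U h g,
                  unif_cont_on d (@dPi X) setT h &
                  unif_cont_on (@dPi X) d (inv_limit f U) g].

End Defs.

(* A point x is coded by its itinerary: at level n and time i, the block of
   U n containing f^i x. Conversely, the level-0 coordinates of a point y of
   the inverse limit are nested blocks, whose intersection is nonempty by
   completeness and a single point z because the blocks form a basis; an
   orbit segment shadowing y up to time i starts in a small block around z,
   so by continuity of f^i the itinerary of z is y again. A d_Pi-small
   distance means agreement of finitely many coordinates, which openness of
   the blocks and continuity of f give near each point; with rho_n-separated
   partitions and f uniformly continuous they hold uniformly, and shrinking
   diameters make the inverse uniformly continuous. *)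

From mathcomp Require Import all_boot all_order all_algebra.
From mathcomp Require Import boolp classical_sets reals.
From mathcomp Require Import lra.
Import Order.TTheory GRing.Theory Num.Theory.
Local Open Scope classical_set_scope.
Local Open Scope ring_scope.

Section InvSucc.
Context {R : realType}.

Lemma inv_succ_gt0 (n : nat) : 0 < 1 / (n%:R + 1) :> R.
Proof. by rewrite divr_gt0 // ltr_wpDl. Qed.

Lemma inv_succ_le {m n : nat} : (m <= n)%N -> 1 / (n%:R + 1) <= 1 / (m%:R + 1) :> R.
Proof.
move=> mn; rewrite ler_pdivlMr ?ltr_wpDl // mulrAC ler_pdivrMr ?ltr_wpDl //.
by rewrite !mul1r lerD2r ler_nat.
Qed.

Lemma inv_succ_le1 (n : nat) : 1 / (n%:R + 1) <= 1 :> R.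
Proof. by have := @inv_succ_le 0 n (leq0n n); rewrite add0r divr1. Qed.

Lemma exists_inv_succ_lt {e : R} : 0 < e -> exists n : nat, 1 / (n%:R + 1) < e.
Proof.
move=> e0; have [n] := ltr_add_invr e0.
by rewrite add0r -natr1 -div1r => ?; exists n.
Qed.

End InvSucc.

Section ShiftDist.
Context {R : realType} {X : Type}.
Implicit Types (s t : nat -> set X) (y z : nat -> nat -> set X).

Lemma first_diffP {s t} : s <> t ->
  s (first_diff s t) <> t (first_diff s t) /\
  forall j, (j < first_diff s t)%N -> s j = t j.
Proof.
move=> st; rewrite /first_diff.
apply: (xgetPex 0%N (P := [set i | s i <> t i /\ forall j, (j < i)%N -> s j = t j])).
have sti : exists i, `[< s i <> t i >].
  apply: contra_notP st => /forallNP st; apply: funext => i.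
  by apply: contra_notP (st i) => /asboolP.
case: (ex_minnP sti) => k /asboolP stk kmin; exists k; split => // j jk.
by case: (pselect (s j = t j)) => // /asboolP /kmin; rewrite leqNgt jk.
Qed.

Lemma shift_dist_ge0 s t : 0 <= shift_dist R s t.
Proof. by rewrite /shift_dist; case: asboolP => // _; apply/ltW/inv_succ_gt0. Qed.

Lemma shift_dist_le1 s t : shift_dist R s t <= 1.
Proof. by rewrite /shift_dist; case: asboolP => // _; apply: inv_succ_le1. Qed.

Lemma shift_dist_le_prefix (M : nat) s t :
  (forall j, (j < M)%N -> s j = t j) -> shift_dist R s t <= 1 / (M%:R + 1).
Proof.
move=> stM; rewrite /shift_dist; case: asboolP => [_|st]; first exact/ltW/inv_succ_gt0.
have [stfd _] := first_diffP st.
by apply: inv_succ_le; rewrite leqNgt; apply/negP => /stM.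
Qed.

Lemma shift_dist_lt1 s t : shift_dist R s t < 1 -> s 0%N = t 0%N.
Proof.
rewrite /shift_dist; case: asboolP => [-> //|st].
have [_ stfd] := first_diffP st.
case: (posnP (first_diff s t)) => [->|/stfd //].
by rewrite add0r divr1 ltxx.
Qed.

Lemma shift_dist_div_le s t (n : nat) :
  shift_dist R s t / (n%:R + 1) <= 1 / (n%:R + 1).
Proof. by rewrite ler_pM2r ?invr_gt0 ?ltr_wpDl // shift_dist_le1. Qed.

Lemma dPi_le y z (c : R) :
  (forall n, shift_dist R (y n) (z n) / (n%:R + 1) <= c) -> dPi R y z <= c.
Proof.
move=> yzc; apply: ge_sup => [|_ [n _ <-] //].
by exists (shift_dist R (y 0%N) (z 0%N) / (0%:R + 1)), 0%N.
Qed.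

Lemma le_dPi y z (n : nat) : shift_dist R (y n) (z n) / (n%:R + 1) <= dPi R y z.
Proof.
apply: ub_le_sup; last by exists n.
exists 1 => _ [m _ <-].
exact: le_trans (shift_dist_div_le _ _ m) (inv_succ_le1 m).
Qed.

Lemma dPi_le_prefix (M : nat) y z :
  (forall n j, (n < M)%N -> (j < M)%N -> y n j = z n j) -> dPi R y z <= 1 / (M%:R + 1).
Proof.
move=> yzM; apply: dPi_le => n; case: (ltnP n M) => [nM|Mn].
  apply: (le_trans _ (shift_dist_le_prefix _ _ _ (yzM n ^~ nM))).
  by rewrite ler_pdivrMr ?ltr_wpDl // ler_peMr ?shift_dist_ge0 // lerDr.
exact: le_trans (shift_dist_div_le _ _ n) (inv_succ_le Mn).
Qed.

Lemma dPi_lt_head (m : nat) y z : dPi R y z < 1 / (m%:R + 1) -> y m 0%N = z m 0%N.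
Proof.
move=> yzm; apply: shift_dist_lt1.
have := le_lt_trans (le_dPi y z m) yzm.
by rewrite div1r -[X in _ < X]mul1r ltr_pM2r ?invr_gt0 ?ltr_wpDl.
Qed.

End ShiftDist.

Section Metric.
Context {R : realType} {X : Type} {d : X -> X -> R}.
Hypothesis dm : is_metric d.

Lemma metric_lt_refl (z : X) {e : R} : 0 < e -> d z z < e.
Proof. by case: dm => _ dE _ _; rewrite (proj2 (dE z z) erefl). Qed.

Lemma mopen_ball (z : X) (e : R) : mopen d [set w | d z w < e].
Proof.
case: dm => _ _ _ tri w /= zw; exists (e - d z w); first by rewrite subr_gt0.
by move=> v wv /=; have := tri z w v; lra.
Qed.

Lemma mopen_neq (z : X) : mopen d [set w | w <> z].
Proof.
case: dm => d0 dE _ _ w /= wz; exists (d w z).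
  by rewrite lt_neqAle d0 andbT; apply/eqP => /esym /dE.
by move=> v + vz; rewrite vz ltxx.
Qed.

End Metric.

Section IterateContinuity.
Context {R : realType} {X : Type} {d : X -> X -> R} {f : X -> X}.

Lemma cont_on_iter (i : nat) : cont_on d d setT f -> cont_on d d setT (iter i f).
Proof.
move=> fc; elim: i => [|i IH] a _ e e0 /=; first by exists e.
have [del1 del10 fdel1] := fc (iter i f a) I e e0.
have [del2 del20 fdel2] := IH a I del1 del10.
by exists del2 => // b _ ab; apply: fdel1 I (fdel2 b I ab).
Qed.

Lemma unif_cont_on_iter (i : nat) :
  unif_cont_on d d setT f -> unif_cont_on d d setT (iter i f).
Proof.
move=> fc; elim: i => [|i IH] e e0 /=; first by exists e.
have [del1 del10 fdel1] := fc e e0.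
have [del2 del20 fdel2] := IH del1 del10.
by exists del2 => // a b _ _ ab; apply: fdel1 _ _ I I (fdel2 a b I I ab).
Qed.

End IterateContinuity.

Lemma exists_pos_forall_lt {R : realType} (P : nat -> R -> Prop) :
  (forall i (del del' : R), 0 < del' <= del -> P i del -> P i del') ->
  (forall i, exists2 del, 0 < del & P i del) ->
  forall K, exists2 del, 0 < del & forall i, (i < K)%N -> P i del.
Proof.
move=> Pdown Ppos; elim=> [|K [del1 del10 P1]]; first by exists 1.
have [del2 del20 P2] := Ppos K.
exists (Order.min del1 del2) => [|i]; first by rewrite lt_min del10 del20.
have mpos : 0 < Order.min del1 del2 by rewrite lt_min del10 del20.
rewrite ltnS leq_eqVlt => /orP[/eqP ->|iK].
  by apply: Pdown P2; rewrite mpos ge_min lexx orbT.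
by apply: Pdown (P1 i iK); rewrite mpos ge_min lexx.
Qed.

Lemma partition_eq {R : realType} {X : Type} {d : X -> X -> R} {P : set (set X)}
  {A B : set X} {x : X} : is_partition d P -> P A -> P B -> A x -> B x -> A = B.
Proof.
case=> _ _ disj _ PA PB Ax Bx; case: (pselect (A = B)) => // AB.
by have : (A `&` B) x by []; rewrite disj.
Qed.

Definition block {X : Type} (U : nat -> set (set X)) (n : nat) (x : X) : set X :=
  xget set0 [set A | U n A /\ A x].

Section Blocks.
Context {R : realType} {X : Type} {d : X -> X -> R} {U : nat -> set (set X)}.
Hypothesis hU : defining_sequence d U.
Local Notation block := (block U).

Lemma blockP (n : nat) (x : X) : U n (block n x) /\ block n x x.
Proof.
have /(xgetPex set0) // : exists A, U n A /\ A x.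
by case: hU => /(_ n) [_ _ _ /(_ x) [A UA Ax]] _ _; exists A.
Qed.

Lemma block_level (n : nat) (x : X) : U n (block n x).
Proof. exact: (blockP n x).1. Qed.

Lemma block_mem (n : nat) (x : X) : block n x x.
Proof. exact: (blockP n x).2. Qed.

Lemma block_eq {n : nat} {x : X} {A : set X} : U n A -> A x -> block n x = A.
Proof.
case: hU => /(_ n) Upart _ _ UA Ax.
exact: partition_eq Upart (block_level n x) UA (block_mem n x) Ax.
Qed.

Lemma block_sub {n m : nat} {x : X} : (n <= m)%N -> block m x `<=` block n x.
Proof.
elim: m => [|m IH]; first by rewrite leqn0 => /eqP ->.
rewrite leq_eqVlt => /orP[/eqP -> //|]; rewrite ltnS => /IH; apply: subset_trans.
case: hU => _ /(_ m _ (block_level m.+1 x)) [B UB mB] _.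
by rewrite (block_eq UB (mB _ (block_mem m.+1 x))).
Qed.

Lemma block_eq_le {n m : nat} {a b : X} :
  (n <= m)%N -> block m a = block m b -> block n a = block n b.
Proof.
move=> nm ab; apply: block_eq (block_level n b) _.
by apply: block_sub nm _ _; rewrite -ab; apply: block_mem.
Qed.

Lemma block_mopen {n : nat} {x : X} : mopen d (block n x).
Proof. by case: hU => /(_ n) [_ /(_ _ (block_level n x)) []]. Qed.

Hypothesis dm : is_metric d.

Lemma block_in_ball (z : X) {e : R} :
  0 < e -> exists n, block n z `<=` [set w | d z w < e].
Proof.
move=> e0; case: hU => _ _ /(_ _ z (mopen_ball dm z e) (metric_lt_refl dm z e0)).
by move=> [n [B UB [Bz Be]]]; exists n; rewrite (block_eq UB Bz).
Qed.

Lemma block_sep (z z' : X) : (forall n, block n z z') -> z = z'.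
Proof.
move=> zz'; case: (pselect (z = z')) => // nzz'.
case: hU => _ _ /(_ _ z (mopen_neq dm z') nzz') [n [B UB [Bz Bz']]].
by exfalso; apply: (Bz' z' _ erefl); rewrite -(block_eq UB Bz).
Qed.

Lemma separated_block_eq (N : nat) (rho : R) :
  (forall A B, U N A -> U N B -> A <> B -> forall a b, A a -> B b -> rho <= d a b) ->
  forall a b, d a b < rho -> block N a = block N b.
Proof.
move=> Nsep a b ab; case: (pselect (block N a = block N b)) => // Nab.
have := Nsep _ _ (block_level N a) (block_level N b) Nab a b.
by rewrite leNgt ab => /(_ (block_mem N a) (block_mem N b)).
Qed.

End Blocks.

Definition code {X : Type} (f : X -> X) (U : nat -> set (set X)) (x : X)
  : nat -> nat -> set X :=
  fun n i => block U n (iter i f x).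

(* [x0] is a junk value, returned only off the inverse limit. *)
Definition decode {X : Type} (x0 : X) (y : nat -> nat -> set X) : X :=
  @xget {classic X} x0 [set z | forall n, y n 0%N z].

Section Coding.
Context {R : realType} {X : Type} {d : X -> X -> R} {f : X -> X}
  {U : nat -> set (set X)}.
Hypothesis hU : defining_sequence d U.
Local Notation block := (block U).
Local Notation code := (code f U).

Lemma invlim_level {y : nat -> nat -> set X} (n i : nat) :
  inv_limit f U y -> U n (y n i).
Proof. by case=> /(_ n) [yn _] _; apply: yn. Qed.

Lemma invlim_sub {y : nat -> nat -> set X} {n m i : nat} :
  inv_limit f U y -> (n <= m)%N -> y m i `<=` y n i.
Proof.
case=> _ ybond; elim: m => [|m IH]; first by rewrite leqn0 => /eqP ->.
rewrite leq_eqVlt => /orP[/eqP -> //|]; rewrite ltnS => /IH.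
exact: subset_trans (ybond m i).2.
Qed.

Lemma code_invlim (x : X) : inv_limit f U (code x).
Proof.
split=> n.
  split=> [i|k]; first exact: (block_level hU).
  by exists x => i _; apply: (block_mem hU).
by move=> i; split; [apply: (block_level hU) | apply: (block_sub hU)].
Qed.

Lemma code_shift (x : X) : code (f x) = sigma_star (code x).
Proof.
by apply: funext => n; apply: funext => i; rewrite /sigma_star /shift /code iterSr.
Qed.

Lemma dPi_code_le (M : nat) (a b : X) :
  (forall i, (i < M)%N -> block M (iter i f a) = block M (iter i f b)) ->
  dPi R (code a) (code b) <= 1 / (M%:R + 1).
Proof.
move=> abM; apply: dPi_le_prefix => n j nM jM.
exact: (block_eq_le hU (ltnW nM) (abM j jM)).
Qed.

Variable x0 : X.
Local Notation decode := (decode x0).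
Hypothesis nested_nonempty : forall V : nat -> set X,
  (forall n, U n (V n)) -> (forall n, V n.+1 `<=` V n) -> exists x, forall n, V n x.

Lemma decodeP {y : nat -> nat -> set X} :
  inv_limit f U y -> forall n, y n 0%N (decode y).
Proof.
move=> yl; apply: (@xgetPex {classic X} x0 [set z | forall n, y n 0%N z]).
apply: nested_nonempty => n; first exact: invlim_level.
exact: (yl.2 n 0%N).2.
Qed.

Lemma invlim_head {y : nat -> nat -> set X} (n : nat) :
  inv_limit f U y -> y n 0%N = block n (decode y).
Proof. by move=> yl; rewrite (block_eq hU (invlim_level n 0 yl) (decodeP yl n)). Qed.

Lemma dPi_lt_decode {m : nat} {y y' : nat -> nat -> set X} :
  inv_limit f U y -> inv_limit f U y' -> dPi R y y' < 1 / (m%:R + 1) ->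
  block m (decode y) (decode y').
Proof.
by move=> yl y'l /dPi_lt_head yy'; rewrite -(invlim_head m yl) yy'; apply: decodeP.
Qed.

Hypothesis dm : is_metric d.

Lemma decode_code (x : X) : decode (code x) = x.
Proof. by apply/esym/(block_sep hU dm) => n; apply: (decodeP (code_invlim x)). Qed.

Lemma decode_cont : cont_on (@dPi R X) d (inv_limit f U) decode.
Proof.
move=> y yl e e0; have [m me] := block_in_ball hU dm (decode y) e0.
exists (1 / (m%:R + 1)) => [|y' y'l yy']; first exact: inv_succ_gt0.
exact/me/dPi_lt_decode.
Qed.

Hypothesis fc : cont_on d d setT f.

Lemma block_iter_near (a : X) (N i : nat) : exists2 del : R, 0 < del &
  forall b, d a b < del -> block N (iter i f b) = block N (iter i f a).
Proof.
have [e e0 eN] := block_mopen hU _ (block_mem hU N (iter i f a)).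
have [del del0 fdel] := cont_on_iter i fc a I e e0.
exists del => // b ab.
exact: (block_eq hU (block_level hU _ _) (eN _ (fdel b I ab))).
Qed.

Lemma code_decode (y : nat -> nat -> set X) :
  inv_limit f U y -> code (decode y) = y.
Proof.
move=> yl; apply: funext => n; apply: funext => i; set z := decode y.
change (block n (iter i f z) = y n i).
have [del del0 zdel] := block_iter_near z n i.
have [m mdel] := block_in_ball hU dm z del0.
have [x xorb] := (yl.1 (maxn m n)).2 i.
have xz : block (maxn m n) z x by rewrite -invlim_head //; apply: xorb.
have <- : block n (iter i f x) = block n (iter i f z).
  by apply/zdel/mdel; exact: (block_sub hU (leq_maxl m n) _ xz).
apply: (block_eq hU (invlim_level n i yl)).
exact: (invlim_sub yl (leq_maxr m n) _ (xorb i (leqnn i))).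
Qed.

Lemma code_cont : cont_on d (@dPi R X) setT code.
Proof.
move=> a _ e e0; have [M Me] := exists_inv_succ_lt e0.
have [del del0 adel] := exists_pos_forall_lt
  (fun i del => forall b, d a b < del -> block M (iter i f b) = block M (iter i f a))
  (fun i _ _ le P b ab => P b (lt_le_trans ab (andP le).2)) (block_iter_near a M) M.
exists del => // b _ ab; apply: le_lt_trans Me.
by apply: dPi_code_le => i iM; rewrite (adel i iM b ab).
Qed.

Lemma code_conjugacy : conjugacy d f U code decode.
Proof.
split; [exact: code_invlim | exact: decode_code | exact: code_decode | |].
- by split; [exact: code_cont | exact: decode_cont].
- exact: code_shift.
Qed.

End Coding.

Section UniformCoding.
Context {R : realType} {X : Type} {d : X -> X -> R} {f : X -> X}
  {U : nat -> set (set X)}.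
Hypothesis hU : defining_sequence d U.
Local Notation block := (block U).

Lemma code_unif_cont :
  (forall n, exists2 rho : R, 0 < rho &
     forall A B, U n A -> U n B -> A <> B -> forall a b, A a -> B b -> rho <= d a b) ->
  unif_cont_on d d setT f -> unif_cont_on d (@dPi R X) setT (code f U).
Proof.
move=> Usep fu e e0; have [M Me] := exists_inv_succ_lt e0.
have [rho rho0 Msep] := Usep M.
have near_iter i : exists2 del : R, 0 < del &
    forall a b, d a b < del -> block M (iter i f a) = block M (iter i f b).
  have [del del0 fdel] := unif_cont_on_iter i fu rho rho0.
  by exists del => // a b ab; apply: separated_block_eq Msep _ _ (fdel a b I I ab).
have [del del0 abdel] := exists_pos_forall_lt
  (fun i del => forall a b, d a b < del -> block M (iter i f a) = block M (iter i f b))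
  (fun i _ _ le P a b ab => P a b (lt_le_trans ab (andP le).2)) near_iter M.
exists del => // a b _ _ ab; apply: le_lt_trans Me.
by apply: (dPi_code_le hU) => i iM; apply: abdel.
Qed.

Lemma decode_unif_cont (x0 : X) :
  (forall V : nat -> set X, (forall n, U n (V n)) -> (forall n, V n.+1 `<=` V n) ->
     exists x, forall n, V n x) ->
  (forall e : R, 0 < e -> exists N, forall n, (N <= n)%N ->
     forall O, U n O -> forall x y, O x -> O y -> d x y <= e) ->
  unif_cont_on (@dPi R X) d (inv_limit f U) (decode x0).
Proof.
move=> nested Udiam e e0; have [N Ne] := Udiam (e / 2) (divr_gt0 e0 (ltr0Sn R 1)).
exists (1 / (N%:R + 1)) => [|y y' yl y'l yy']; first exact: inv_succ_gt0.
have := Ne N (leqnn N) _ (block_level hU N (decode x0 y)) _ _ (block_mem hU N _)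
  (dPi_lt_decode hU x0 nested yl y'l yy').
lra.
Qed.

End UniformCoding.

Theorem theorem4p13 (R : realType) (X : Type) (d : X -> X -> R)
  (f : X -> X) (U : nat -> set (set X)) :
  is_metric d -> separable d -> (exists x : X, True) ->
  cont_on d d setT f ->
  complete_defseq d U ->
  topologically_conjugate_to_invlim d f U /\
  (tame_defseq d U -> unif_cont_on d d setT f ->
   uniformly_conjugate_to_invlim d f U).
Proof.
move=> dm _ [x0 _] fc [hU nested].
have hconj := code_conjugacy hU x0 nested dm fc.
split; first by exists (code f U), (decode x0).
move=> [Udiam Usep] fu; exists (code f U), (decode x0); split=> //.
  exact: code_unif_cont.
exact: decode_unif_cont.
Qed.
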